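(* Consider an instance of \textsc{Min-Lin-Eq$(q)$-Full} on the complete graph with $n$ vertices and $m=\binom n2$ edges, let $\mathrm{OPT_{val}}$ be its optimal value, let $\varepsilon=\mathrm{OPT_{val}}/m$ and assume $\varepsilon<\frac12$. Let $\nu=2/(1-2\varepsilon)$. Then the Voting Algorithm returns an assignment with at most $(\varepsilon+2\varepsilon^2\nu(2+\nu)+o(1))\,m$ unsatisfied constraints (where $o(1)$ is with respect to $n\to\infty$).
   Context: \textsc{Min-Lin-Eq$(q)$-Full}: given a complete simple graph $G=(V,E)$, $n=|V|$, $m=\binom n2$, a positive integer $q$, and for each ordered pair $(u,v)$ of distinct vertices an integer $c_{uv}\in\{0,\dots,q-1\}$ with $c_{vu}\equiv -c_{uv}\pmod q$, each edge $uv$ carries the constraint $x_u-x_v\equiv c_{uv}\pmod q$ on assignments $x:V\to\{0,\dots,q-1\}$; the goal is to minimize the number of violated constraints, whose minimum is $\mathrm{OPT_{val}}$. Voting Algorithm: for each choice of pivot $p\in V$: (1) label $p$ with $0$ and give each vertex $v\neq p$ the temporary label $\mathrm{TEMP}(v)=c_{vp}$; (2) for each vertex $v$, every vertex $u\notin\{p,v\}$ casts the vote $(c_{vu}+\mathrm{TEMP}(u))\bmod q$ for $v$; (3) each vertex $v$ receives as final label $\mathrm{FINAL}(v)$ a label occurring most often among its votes (ties broken arbitrarily). (4) Output, among all choices of $p$, the FINAL assignment violating the fewest constraints. *)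

From mathcomp Require Import all_boot all_order all_algebra.
Unset Printing Implicit Defensive.
Import Order.TTheory GRing.Theory Num.Theory.

(* An instance of Min-Lin-Eq(q)-Full on the complete graph with vertex set 'I_n:
   c u v is the right-hand side c_{uv} of the constraint x_u - x_v = c_{uv} (mod q). *)
Definition valid_instance (n q : nat) (c : 'I_n -> 'I_n -> nat) : Prop :=
  0 < q /\
  (forall u v : 'I_n, u != v -> c u v < q) /\
  (forall u v : 'I_n, u != v -> (c u v + c v u) %% q = 0).

Definition sat_edge (n q : nat) (c : 'I_n -> 'I_n -> nat) (x : 'I_n -> 'I_q)
  (u v : 'I_n) : bool := x u == x v + c u v %[mod q].

Definition nviol (n q : nat) (c : 'I_n -> 'I_n -> nat) (x : 'I_n -> 'I_q) : nat :=
  #|[set e : 'I_n * 'I_n | (e.1 < e.2) && ~~ sat_edge n q c x e.1 e.2]|.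

Definition opt_val (n q : nat) (c : 'I_n -> 'I_n -> nat) : nat :=
  \big[minn/'C(n, 2)]_(x : {ffun 'I_n -> 'I_q}) nviol n q c x.

(* number of votes for label a received by v, with pivot p:
   u (u <> p, u <> v) votes (c_vu + TEMP(u)) mod q, where TEMP(u) = c_up *)
Definition votes (n q : nat) (c : 'I_n -> 'I_n -> nat) (p v : 'I_n) (a : 'I_q) : nat :=
  #|[set u : 'I_n | [&& u != p, u != v & (c v u + c u p) %% q == a]]|.

(* FINAL is a legal outcome of steps (1)-(3) for pivot p (arbitrary tie breaking):
   each vertex gets a most frequent label among its votes *)
Definition is_final (n q : nat) (c : 'I_n -> 'I_n -> nat) (p : 'I_n)
  (F : 'I_n -> 'I_q) : Prop :=
  forall (v : 'I_n) (a : 'I_q), votes n q c p v a <= votes n q c p v (F v).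

Definition voting_output (n q : nat) (c : 'I_n -> 'I_n -> nat) (y : 'I_n -> 'I_q) : Prop :=
  exists F : 'I_n -> 'I_n -> 'I_q,
    (forall p, is_final n q c p (F p)) /\
    exists p0, y = F p0 /\ forall p, nviol n q c (F p0) <= nviol n q c (F p).

From mathcomp Require Import all_boot all_order all_algebra.
From mathcomp Require Import zify lra ring.
Import Order.TTheory GRing.Theory Num.Theory.

Set Implicit Arguments.
Unset Strict Implicit.

(* Let x be an optimal assignment and p a vertex of least violation degree under x, so
   deg p <= 2 OPT / n.  Relabel x so that p gets label 0 (call it L).  With pivot p, a voter
   u for v votes L v whenever x satisfies both vu and up, so at most deg v + deg p voters
   dissent from L v.  Hence every "bad" vertex, one whose final label is not L v, has
   deg v + deg p >= n/2 - 1, and summing gives about nu eps n bad vertices.  A good vertex u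
   voting with the majority for v satisfies the edge vu under FINAL, so FINAL violates at
   most OPT edges between good vertices, k^2 between bad ones and k (1 + deg v + 2 deg p)
   from a bad v to good vertices; this is OPT + k^2 + k (1 + 2 deg p) in total, i.e.
   (eps + 2 eps^2 nu (2 + nu)) m + O(n). *)

Lemma sum_nat_eq1 (T : finType) (a : T) : \sum_(u : T) (u == a : nat) = 1.
Proof. by rewrite (bigD1 a) //= eqxx big1 // => u /negPf->. Qed.

Section Violations.
Variables (n q : nat) (c : 'I_n -> 'I_n -> nat).
Hypothesis hc : valid_instance n q c.

Local Notation sat := (sat_edge n q c).

Lemma valid_q_gt0 : 0 < q. Proof. by case: hc. Qed.

Lemma sat_edgeC (y : 'I_n -> 'I_q) u v : u != v -> sat y u v = sat y v u.
Proof.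
have [_ [_ cC]] := hc.
suff imp a b : a != b -> sat y a b -> sat y b a.
  by move=> uv; apply/idP/idP; apply: imp; rewrite // eq_sym.
move=> ab /eqP yab; apply/eqP.
by rewrite -modnDml yab modnDml -addnA -modnDmr cC // addn0.
Qed.

Definition viol (y : 'I_n -> 'I_q) (v u : 'I_n) : bool := (u != v) && ~~ sat y v u.

Lemma violC y v u : viol y v u = viol y u v.
Proof. by rewrite /viol; case: eqVneq => [->|uv] //; rewrite sat_edgeC // eq_sym. Qed.

Lemma sum_viol y : \sum_(v : 'I_n) \sum_(u : 'I_n) viol y v u = 2 * nviol n q c y.
Proof.
pose lt_viol (v u : 'I_n) : nat := (v < u) && ~~ sat y v u.
have nviolE : nviol n q c y = \sum_(v : 'I_n) \sum_(u : 'I_n) lt_viol v u.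
  rewrite /nviol -sum1_card big_mkcond pair_big /=.
  by apply: eq_bigr => -[a b] _; rewrite inE.
have violE v u : viol y v u = lt_viol v u + lt_viol u v :> nat.
  rewrite /viol /lt_viol -val_eqE; case: ltngtP => [vu|uv|/val_inj->] /=.
  - by rewrite addn0.
  - by rewrite sat_edgeC // -val_eqE gtn_eqF.
  - by [].
under eq_bigr do under eq_bigr do rewrite violE.
under eq_bigr do rewrite big_split.
by rewrite big_split /= [X in _ + X]exchange_big -nviolE addnn -mul2n.
Qed.

Definition deg (y : 'I_n -> 'I_q) (v : 'I_n) : nat := \sum_(u : 'I_n) viol y v u.

Lemma deg_le y v : deg y v <= n.-1.
Proof.
rewrite -(card_ord n) -(cardC1 v) -sum1_card big_mkcond /=.
by apply: leq_sum => u _; rewrite inE /viol; case: (u != v); rewrite ?leq_b1.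
Qed.

Lemma nviol_le_bin y : nviol n q c y <= 'C(n, 2).
Proof.
rewrite -(leq_pmul2l (isT : 0 < 2)) -sum_viol -mul_bin_diag bin1.
apply: (@leq_trans (\sum_(v < n) n.-1)); last by rewrite sum_nat_const card_ord.
by apply: leq_sum => v _; apply: deg_le.
Qed.

Lemma opt_val_witness : exists x : 'I_n -> 'I_q, nviol n q c x <= opt_val n q c.
Proof.
pose x0 : 'I_q := Ordinal valid_q_gt0.
rewrite /opt_val; elim/big_ind: _ => [|r1 r2 [x1 h1] [x2 h2]|x _].
- by exists (fun=> x0); apply: nviol_le_bin.
- by case: (leqP r1 r2) => h; [exists x1 | exists x2]; lia.
- by exists x.
Qed.

Definition relabel (x : 'I_n -> 'I_q) (p v : 'I_n) : 'I_q :=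
  Ordinal (ltn_pmod (x v + (q - x p)) valid_q_gt0).

Lemma relabelK x p v : relabel x p v + x p = x v %[mod q].
Proof. by rewrite /= modnDml -addnA subnK ?modnDr // ltnW. Qed.

Lemma sat_relabel x p u v : sat (relabel x p) u v = sat x u v.
Proof. by rewrite /sat_edge -(eqn_modDr (x p)) relabelK addnAC -modnDml relabelK modnDml. Qed.

Lemma relabel_pivot x p u : sat x u p -> relabel x p u = c u p %[mod q].
Proof. by move=> /eqP xu; apply/eqP; rewrite -(eqn_modDr (x p)) relabelK xu addnC. Qed.

Section Votes.
Variable p : 'I_n.

Definition voter (v u : 'I_n) : bool := (u != p) && (u != v).
Definition vote (v u : 'I_n) : nat := (c v u + c u p) %% q.
Definition nvoters (v : 'I_n) : nat := \sum_(u : 'I_n) voter v u.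
Definition dissent (v : 'I_n) (a : nat) : nat := \sum_(u : 'I_n) voter v u && (vote v u != a).

Lemma votesE v (a : 'I_q) :
  votes n q c p v a = \sum_(u : 'I_n) voter v u && (vote v u == a).
Proof. by rewrite /votes -sum1_card big_mkcond; apply: eq_bigr => u _; rewrite inE andbA. Qed.

Lemma votes_dissent v (a : 'I_q) : votes n q c p v a + dissent v a = nvoters v.
Proof.
rewrite votesE -big_split; apply: eq_bigr => u _.
by case: (voter v u); case: (vote v u == a).
Qed.

Lemma votes_le_dissent v (a b : 'I_q) : a != b -> votes n q c p v b <= dissent v a.
Proof.
move=> ab; rewrite votesE; apply: leq_sum => u _.
by case: (voter v u); case: eqP => //= ->; rewrite eq_sym ab.
Qed.

Lemma nvoters_ge v : n <= nvoters v + 2.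
Proof.
rewrite -{1}(card_ord n) -sum1_card.
apply: (@leq_trans (\sum_(u : 'I_n) ((voter v u : nat) + (u == p) + (u == v)))).
  by apply: leq_sum => u _; rewrite /voter; case: (u == p); case: (u == v).
by rewrite !big_split /= !sum_nat_eq1 -addnA.
Qed.

End Votes.

Section Pivot.
Variables (x F : 'I_n -> 'I_q) (p : 'I_n).
Hypothesis hF : is_final n q c p F.

Local Notation L := (relabel x p).

Lemma vote_relabel v u : sat x v u -> sat x u p -> vote p v u = L v.
Proof.
rewrite -(sat_relabel x p) => /eqP Lv /relabel_pivot Lu.
by rewrite -(modn_small (ltn_ord (L v))) Lv -modnDml Lu modnDml addnC.
Qed.

Lemma dissent_relabel_le v : dissent p v (L v) <= deg x v + deg x p.
Proof.
rewrite -big_split; apply: leq_sum => u _.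
case vu: (voter p v u) => //=; case/andP: vu => up uv.
rewrite /viol up uv /=.
case s1: (sat x v u); case s2: (sat x p u) => //=; try by case: (_ != _).
by rewrite vote_relabel ?eqxx // sat_edgeC // s2.
Qed.

Lemma dissent_final_le v : dissent p v (F v) <= dissent p v (L v).
Proof.
have := votes_dissent p v (F v); have := votes_dissent p v (L v); have := hF v (L v).
lia.
Qed.

Lemma bad_deg_ge v : F v != L v -> n <= 2 * (deg x v + deg x p) + 2.
Proof.
rewrite eq_sym => LF; have := votes_le_dissent p v LF.
have := hF v (L v); have := votes_dissent p v (L v).
have := dissent_relabel_le v; have := nvoters_ge p v.
lia.
Qed.

Definition nbad : nat := \sum_(v : 'I_n) (F v != L v).

Lemma nbad_mul_le : nbad * n <= 4 * nviol n q c x + 2 * (nbad * deg x p) + 2 * nbad.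
Proof.
have : nbad * n <= \sum_(v : 'I_n) (2 * deg x v + (F v != L v) * (2 * deg x p + 2)).
  rewrite /nbad big_distrl; apply: leq_sum => v _ /=.
  case: (boolP (F v != L v)) => //= FL.
  by have := bad_deg_ge FL; lia.
rewrite big_split /= -big_distrr -big_distrl /= -/nbad sum_viol.
lia.
Qed.

Lemma sat_final_of_vote v u :
  F u = L u -> sat x u p -> vote p v u = F v -> sat F v u.
Proof.
move=> Fu /relabel_pivot Lu Fv.
by rewrite /sat_edge -Fv Fu /vote modn_mod eq_sym -modnDml Lu modnDml addnC.
Qed.

Lemma good_viol_le v :
  \sum_(u : 'I_n) (F u == L u) * viol F v u <= 1 + dissent p v (F v) + deg x p.
Proof.
rewrite -(sum_nat_eq1 p) -!big_split; apply: leq_sum => u _ /=.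
case: (eqVneq (F u) (L u)) => [Fu|]; last by [].
case: (eqVneq u p) => [->|up]; first lia.
case: (eqVneq u v) => [->|uv]; first by rewrite /viol eqxx.
rewrite /voter up uv.
case: (boolP (sat x p u)) => [s|ns]; last by rewrite /viol up ns; lia.
case: (eqVneq (vote p v u) (F v)) => [Fv|_]; last lia.
have sFvu : sat F v u by apply: sat_final_of_vote => //; rewrite sat_edgeC.
by rewrite /viol sFvu andbF.
Qed.

Lemma sum_viol_final_le :
  \sum_(v : 'I_n) \sum_(u : 'I_n) viol F v u <=
  \sum_(v : 'I_n) \sum_(u : 'I_n) viol x v u + 2 * (nbad * nbad) + 2 * (nbad * (1 + 2 * deg x p)).
Proof.
pose bad v : bool := F v != L v.
pose sum2 (f : 'I_n -> 'I_n -> nat) := \sum_(v : 'I_n) \sum_(u : 'I_n) f v u.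
have sum2D f g : sum2 (fun v u => f v u + g v u) = sum2 f + sum2 g.
  by rewrite /sum2 -big_split; apply: eq_bigr => v _; rewrite big_split.
have sum2_le f g : (forall v u, f v u <= g v u) -> sum2 f <= sum2 g.
  by move=> fg; apply: leq_sum => v _; apply: leq_sum => u _.
have swapY : sum2 (fun v u => bad u * viol x v u) = sum2 (fun v u => bad v * viol x v u).
  by rewrite /sum2 exchange_big; apply: eq_bigr => v _; apply: eq_bigr => u _; rewrite violC.
have swapZ : sum2 (fun v u => bad u * ((F v == L v) * viol F v u)) =
    sum2 (fun v u => bad v * ((F u == L u) * viol F v u)).
  by rewrite /sum2 exchange_big; apply: eq_bigr => v _; apply: eq_bigr => u _; rewrite violC.
have bad_bad : sum2 (fun v u => bad v * bad u) = nbad * nbad.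
  by rewrite /sum2 /nbad big_distrl; apply: eq_bigr => v _; rewrite big_distrr.
have bad_good : sum2 (fun v u => bad v * ((F u == L u) * viol F v u)) <=
    nbad * (1 + 2 * deg x p) + sum2 (fun v u => bad v * viol x v u).
  rewrite /sum2 /nbad big_distrl -big_split; apply: leq_sum => v _ /=.
  rewrite /bad; case: (F v != L v); last by rewrite big1 // => u _; rewrite mul0n.
  have -> : \sum_(u : 'I_n) true * ((F u == L u) * viol F v u) =
      \sum_(u : 'I_n) (F u == L u) * viol F v u by apply: eq_bigr => u _; rewrite mul1n.
  have -> : \sum_(u : 'I_n) true * viol x v u = deg x v by apply: eq_bigr => u _; rewrite mul1n.
  have := good_viol_le v; have := dissent_final_le v; have := dissent_relabel_le v.
  lia.
have pointwise v u :
    viol F v u + bad v * viol x v u + bad u * viol x v u <=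
    viol x v u + (bad v * bad u + bad v * bad u) + bad v * ((F u == L u) * viol F v u) +
    bad u * ((F v == L v) * viol F v u).
  (* On good vertices F is x up to relabelling; the x-violations at bad vertices on the left
     are absorbed by [bad_good]. *)
  rewrite /bad; case: (eqVneq (F v) (L v)) => Fv; case: (eqVneq (F u) (L u)) => Fu; try lia.
  have -> : viol F v u = viol x v u by rewrite /viol -(sat_relabel x p) /sat_edge Fv Fu.
  lia.
move: (sum2_le _ _ pointwise); rewrite !sum2D swapY swapZ bad_bad.
move: bad_good; rewrite /sum2 /=; lia.
Qed.

End Pivot.

Lemma voting_output_bound y : voting_output n q c y ->
  exists D k s : nat,
    [/\ D <= opt_val n q c, n * s <= 2 * D, k * n <= 4 * D + 2 * (k * s) + 2 * k
       & nviol n q c y <= D + k * k + k * (1 + 2 * s)].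
Proof.
case=> F [hF [p0 [-> F_min]]].
have [x x_opt] := opt_val_witness.
pose p := [arg min_(i < p0) deg x i].
have p_min v : deg x p <= deg x v by rewrite /p; case: arg_minnP => // i _; apply.
exists (nviol n q c x), (nbad x (F p) p), (deg x p); split => //.
- rewrite -sum_viol -{1}(card_ord n) -sum_nat_const.
  by apply: leq_sum => v _; apply: p_min.
- exact: nbad_mul_le.
- have := sum_viol_final_le x (hF p); rewrite !sum_viol.
  have := F_min p; lia.
Qed.

End Violations.

Local Open Scope ring_scope.

Lemma natr_bin2 (R : pzRingType) n : n%:R * (n%:R - 1) = 2 * 'C(n, 2)%:R :> R.
Proof.
case: n => [|n]; first by rewrite mul0r bin0n mulr0.
by rewrite -natrM -mul_bin_diag bin1 natrM /= mulrSr addrK.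
Qed.

Section ErrorBound.
Variables (R : realFieldType) (e nu : R).
Implicit Types n m k s D V : R.

Lemma nu_gt0 : e < 1 / 2 -> nu * (1 - 2 * e) = 2 -> 0 < nu.
Proof. by move=> e_lt nuE; rewrite -(pmulr_lgt0 _ (_ : 0 < 1 - 2 * e)) ?nuE //; lra. Qed.

Lemma error_coef_ge1 : 1 / 4 <= e < 1 / 2 -> nu * (1 - 2 * e) = 2 ->
  1 <= 2 * e ^+ 2 * nu * (2 + nu).
Proof.
move=> /andP[e_ge e_lt] nuE; have nu_gt0 := nu_gt0 e_lt nuE.
have nu_ge4 : 4 <= nu by nra.
have : 1 / 16 <= e ^+ 2 by rewrite expr2; nra.
have : 24 <= nu * (2 + nu) by nra.
nra.
Qed.

Lemma nu_small : 0 <= e <= 1 / 4 -> nu * (1 - 2 * e) = 2 ->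
  [/\ 0 < nu, nu <= 4 & nu * e <= 1].
Proof.
move=> /andP[e_ge0 e_le] nuE; have nu_gt0 : 0 < nu by apply: nu_gt0 nuE; lra.
by split=> //; nra.
Qed.

Lemma nbad_le n k s : 0 <= e <= 1 / 4 -> nu * (1 - 2 * e) = 2 ->
  6 <= n -> 0 <= k -> s <= e * (n - 1) ->
  k * (n - 2) <= 2 * e * n * (n - 1) + 2 * k * s -> k <= nu * e * n + 4.
Proof.
move=> e_small nuE n_ge6 k_ge0 s_le hk.
have [nu_gt0 nu_le4 nue_le1] := nu_small e_small nuE; case/andP: e_small => e_ge0 _.
set K := nu * e * n.
have K_le : K <= n by rewrite /K ler_piMl //; lra.
have hX : k * (n - 2 - 2 * e * (n - 1)) <= 2 * e * n * (n - 1).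
  have : k * s <= k * (e * (n - 1)) by rewrite ler_wpM2l.
  lra.
have hk' : k * (2 * (n - 1) - nu) <= 2 * K * (n - 1).
  have -> : 2 * (n - 1) - nu = nu * (n - 2 - 2 * e * (n - 1)).
    by rewrite -[2 in LHS]nuE; ring.
  have := ler_wpM2l (ltW nu_gt0) hX.
  rewrite /K; lra.
have K_ge0 : 0 <= K by rewrite /K !mulr_ge0 //; lra.
have : K * nu <= n * 4 by apply: ler_pM => //; lra.
nra.
Qed.

Lemma voting_error_le n m D k s V : 0 <= e <= 1 / 4 -> nu * (1 - 2 * e) = 2 ->
  1 <= n -> n * (n - 1) = 2 * m -> D <= e * m -> 0 <= s <= e * (n - 1) ->
  0 <= k <= nu * e * n + 4 -> V <= D + k ^+ 2 + k * (1 + 2 * s) ->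
  V <= (e + 2 * e ^+ 2 * nu * (2 + nu)) * m + 33 * n.
Proof.
move=> e_small nuE n_ge1 hm hD /andP[s_ge0 s_le] /andP[k_ge0 k_le] hV.
have [nu_gt0 nu_le4 nue_le1] := nu_small e_small nuE; case/andP: e_small => e_ge0 e_le.
set K := nu * e * n.
have K_ge0 : 0 <= K by rewrite /K !mulr_ge0 //; lra.
have K_le : K <= n by rewrite /K ler_piMl //; lra.
have hk2 : k ^+ 2 <= (K + 4) ^+ 2 by rewrite !expr2; apply: ler_pM.
have hks : k * (1 + 2 * s) <= (K + 4) * (1 + 2 * e * n) by apply: ler_pM => //; lra.
have main : (K + 4) ^+ 2 + (K + 4) * (1 + 2 * e * n) =
    e ^+ 2 * nu * (2 + nu) * (2 * m) + e ^+ 2 * nu * (2 + nu) * n + 9 * K + 20 + 8 * (e * n).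
  have -> : 2 * m = n ^+ 2 - n by rewrite -hm; ring.
  by rewrite /K; ring.
have coef : e ^+ 2 * nu * (2 + nu) <= 1 / 16 * 24.
  have e2 : e ^+ 2 <= 1 / 16.
    have : e * e <= 1 / 4 * (1 / 4) by apply: ler_pM.
    rewrite expr2; lra.
  have nu2 : nu * (2 + nu) <= 24 by nra.
  rewrite -mulrA; apply: ler_pM => //; first exact: sqr_ge0.
  by apply: mulr_ge0; lra.
have : e ^+ 2 * nu * (2 + nu) * n <= 1 / 16 * 24 * n by apply: ler_wpM2r => //; lra.
have : e * n <= 1 / 4 * n by apply: ler_wpM2r => //; lra.
lra.
Qed.

End ErrorBound.

Lemma voting_bound (R : realFieldType) (e n m D k s V d : R) : 0 <= e < 1 / 2 ->
  7 <= n -> 66 <= d * (n - 1) -> n * (n - 1) = 2 * m -> 0 <= D <= e * m ->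
  0 <= s -> 0 <= k -> n * s <= 2 * D -> k * n <= 4 * D + 2 * (k * s) + 2 * k ->
  V <= D + k ^+ 2 + k * (1 + 2 * s) -> V <= m ->
  V <= (e + 2 * e ^+ 2 * (2 / (1 - 2 * e)) * (2 + 2 / (1 - 2 * e)) + d) * m.
Proof.
move=> /andP[e_ge0 e_lt] n_ge7 hd hm /andP[D_ge0 hD] s_ge0 k_ge0 hs hk hV V_le.
set nu := 2 / (1 - 2 * e).
have nuE : nu * (1 - 2 * e) = 2 by rewrite divfK //; apply: lt0r_neq0; lra.
have m_gt0 : 0 < m by nra.
have d_ge0 : 0 <= d by nra.
(* The count of bad vertices degenerates as e tends to 1/2, but for e >= 1/4 the claim is
   already weaker than V <= m. *)
have [e_ge|e_lt4] := lerP (1 / 4) e.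
  have : 1 <= 2 * e ^+ 2 * nu * (2 + nu) by apply: error_coef_ge1 nuE; rewrite e_ge.
  by move=> coef1; apply: (le_trans V_le); rewrite ler_peMl //; lra.
have e_small : 0 <= e <= 1 / 4 by rewrite e_ge0; lra.
have em : e * (n * (n - 1)) = 2 * (e * m) by rewrite hm; ring.
have s_le : s <= e * (n - 1).
  by rewrite -(ler_pM2l (_ : 0 < n)); lra.
have k_le : k <= nu * e * n + 4 by apply: nbad_le e_small nuE _ k_ge0 s_le _; lra.
have : V <= (e + 2 * e ^+ 2 * nu * (2 + nu)) * m + 33 * n.
  apply: voting_error_le e_small nuE _ hm hD _ _ hV; rewrite ?s_ge0 ?s_le ?k_ge0 //.
  lra.
have dm : d * (n * (n - 1)) = 2 * (d * m) by rewrite hm; ring.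
have : n * 66 <= n * (d * (n - 1)) by apply: ler_wpM2l => //; lra.
lra.
Qed.

Theorem lemma1 :
  forall delta : rat, 0 < delta ->
  exists N : nat, forall (n : nat), (N <= n)%N ->
  forall (q : nat) (c : 'I_n -> 'I_n -> nat), valid_instance n q c ->
  let m : rat := ('C(n, 2))%:R in
  let eps : rat := (opt_val n q c)%:R / m in
  eps < 1 / 2 ->
  let nu : rat := 2 / (1 - 2 * eps) in
  forall y : 'I_n -> 'I_q, voting_output n q c y ->
  (nviol n q c y)%:R <= (eps + 2 * eps ^+ 2 * nu * (2 + nu) + delta) * m.
Proof.
move=> delta delta_gt0.
have [N N_gt] : exists N : nat, 66 < N%:R * delta.
  exists (Num.Def.archi_bound (66 / delta)); rewrite -(ltr_pdivrMr _ _ delta_gt0).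
  by apply: archi_boundP; rewrite divr_ge0 // ltW.
exists (N + 7)%N => n n_ge q c hc m eps eps_lt nu y hy.
have [D [k [s [D_le hs hk hy']]]] := voting_output_bound hc hy.
have m_gt0 : 0 < m by rewrite ltr0n bin_gt0; lia.
apply: (@voting_bound _ eps n%:R m D%:R k%:R s%:R).
- by rewrite eps_lt andbT divr_ge0 ?ler0n ?ltW.
- by rewrite (ler_nat _ 7); lia.
- apply/ltW/(lt_le_trans N_gt).
  by rewrite mulrC (ler_pM2l delta_gt0) lerBrDr natr1 ler_nat; lia.
- exact: natr_bin2.
- by rewrite ler0n /eps (divfK (lt0r_neq0 m_gt0)) ler_nat.
- exact: ler0n.
- exact: ler0n.
- by rewrite -!natrM ler_nat.
- by rewrite -!natrM -!natrD ler_nat.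
- by rewrite expr2 -!natrM nat1r -natrM -!natrD ler_nat.
- by rewrite ler_nat nviol_le_bin.
Qed.
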